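(* Let $D$ be a squarefree integer and $q>3$ a prime not dividing $D$. Then $H_D^{(q)}\subset E^{(1)}(\mathbb{Q})$ depends only on the Legendre symbol $(D/q)$; denote it $H^{(q),(D/q)}$. Let $O_q$ be the order of the reduction of $P$ in $E^{(1)}(\mathbb{F}_q)$. Then there exist subsets $M_1^{(q)}$ and $M_{-1}^{(q)}$ of $\mathbb{Z}/O_q\mathbb{Z}$ such that $H^{(q),(D/q)}=\{kP : k\text{ odd and } k\equiv m\pmod{O_q}\text{ for some } m\in M_{(D/q)}^{(q)}\}$. Moreover, $1\in M_1^{(q)}$, and for $\varepsilon=\pm1$, if $k\in M_\varepsilon^{(q)}$ then $-k\in M_\varepsilon^{(q)}$.
   Context: $C_D\subset\mathbb{P}^4$ is the curve over $\mathbb{Q}$ given by $X_0^2-2X_1^2+X_2^2=0$, $X_1^2-2X_2^2+DX_3^2=0$, $X_2^2-2DX_3^2+X_4^2=0$, and $C_D(\mathbb{F}_q)$ the $\mathbb{F}_q$-points of its reduction. $E^{(1)}: y^2=x(x+2)(x+6)$, $P=(6,24)$, $H=\{kP: k\text{ odd}\}$, $\phi:C_D\to E^{(1)}$ is $\phi([x_0:\dots:x_4])=(6x_0^2/x_4^2,\,24x_0x_1x_2/x_4^3)$ with reduction $\phi_q$, $\mathrm{red}_q$ is reduction mod $q$ on $E^{(1)}(\mathbb{Q})$, and $H_D^{(q)}:=\{R\in H : \mathrm{red}_q(R)\in\phi_q(C_D(\mathbb{F}_q))\}$. *)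

From HB Require Import structures.
From mathcomp Require Import all_boot all_order all_algebra.
Set Implicit Arguments. Unset Strict Implicit. Unset Printing Implicit Defensive.
Import Order.TTheory GRing.Theory Num.Theory.
Local Open Scope ring_scope.

(* Points of the Weierstrass curve E^(1): y^2 = x^3 + 8 x^2 + 12 x
   (= x(x+2)(x+6)) over a field K: None is the point at infinity O,
   Some (x, y) an affine point. *)
Definition pt (K : Type) := option (K * K).

Section Curve.
Variable K : fieldType.

Definition a2 : K := 8%:R.
Definition a4 : K := 12%:R.

Definition negpt (P : pt K) : pt K :=
  match P with None => None | Some (x, y) => Some (x, - y) end.

Definition addpt (P Q : pt K) : pt K :=
  match P, Q with
  | None, _ => Q
  | _, None => P
  | Some (x1, y1), Some (x2, y2) =>
      if (x1 == x2) && (y1 == - y2) then None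
      else
        let l := if x1 == x2
                 then (3%:R * x1 ^+ 2 + 2%:R * a2 * x1 + a4) / (2%:R * y1)
                 else (y2 - y1) / (x2 - x1) in
        let x3 := l ^+ 2 - a2 - x1 - x2 in
        Some (x3, - (y1 + l * (x3 - x1)))
  end.

Definition mulpt (k : int) (P : pt K) : pt K :=
  match k with
  | Posz n => iter n (addpt P) None
  | Negz n => negpt (iter n.+1 (addpt P) None)
  end.
End Curve.

Definition P0 : pt rat := Some (6%:R, 24%:R).

Definition oddz (k : int) : bool := ~~ (2 %| k)%Z.
Definition inH (R : pt rat) : Prop := exists k : int, oddz k /\ R = mulpt k P0.

Arguments mulpt {K}.
Definition ratF (q : nat) (r : rat) : 'F_q := (numq r)%:~R / (denq r)%:~R.
Definition redq (q : nat) (R : pt rat) : pt 'F_q :=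
  match R with
  | None => None
  | Some (x, y) => if (q%:Z %| denq x)%Z then None else Some (ratF q x, ratF q y)
  end.

(* phi_q : C_D(F_q) -> E^(1)(F_q), [x0:...:x4] |-> (6x0^2/x4^2, 24x0x1x2/x4^3);
   at the points with x4 = 0 (where necessarily x0 <> 0) the morphism takes
   the value O. *)
#[local] Unset Implicit Arguments.
Definition phiq (q : nat) (x0 x1 x2 x4 : 'F_q) : pt 'F_q :=
  if x4 == 0 then None
  else Some (6%:R * x0 ^+ 2 / x4 ^+ 2, 24%:R * x0 * x1 * x2 / x4 ^+ 3).

(* (x0,...,x4) is a (nonzero) representative of a point of C_D(F_q) *)
Definition onCD (q : nat) (D : int) (x0 x1 x2 x3 x4 : 'F_q) : bool :=
  [|| x0 != 0, x1 != 0, x2 != 0, x3 != 0 | x4 != 0] &&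
  [&& x0 ^+ 2 - 2%:R * x1 ^+ 2 + x2 ^+ 2 == 0,
      x1 ^+ 2 - 2%:R * x2 ^+ 2 + D%:~R * x3 ^+ 2 == 0 &
      x2 ^+ 2 - 2%:R * D%:~R * x3 ^+ 2 + x4 ^+ 2 == 0].

Definition imphi (q : nat) (D : int) (S : pt 'F_q) : Prop :=
  exists x0 x1 x2 x3 x4 : 'F_q, onCD q D x0 x1 x2 x3 x4 /\ S = phiq q x0 x1 x2 x4.

Definition HDq (q : nat) (D : int) (R : pt rat) : Prop :=
  inH R /\ imphi q D (redq q R).

Definition squarefreez (D : int) : Prop :=
  forall n : nat, (1 < n)%N -> ~~ ((n%:Z) ^+ 2 %| D)%Z.

Definition legendre (q : nat) (D : int) : int :=
  if (q%:Z %| D)%Z then 0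
  else if [exists x : 'F_q, x ^+ 2 == D%:~R] then 1 else -1.

Definition is_orderP (q O : nat) : Prop :=
  (0 < O)%N /\ mulpt O%:Z (redq q P0) = None /\
  forall n : nat, (0 < n < O)%N -> mulpt n%:Z (redq q P0) <> None.

From HB Require Import structures.
From mathcomp Require Import all_boot all_order all_algebra all_fingroup all_solvable.
From mathcomp Require Import ring zify.
Set Implicit Arguments. Unset Strict Implicit. Unset Printing Implicit Defensive.
Import GRing.Theory.
Local Open Scope ring_scope.

(* Reduction modulo [q] is additive on the multiples of [P]. Between points
   with [q]-integral abscissae the chord-tangent formulas commute with
   reduction, the only degenerate case being that of reductions which are
   opposite, where the sum reduces to [O]; this needs [2 * 24 <> 0] mod [q].
   A point with non-integral abscissa reduces to [O], and in the chart
   [(1/x, y/x^2)] at infinity one checks that adding [P] to it gives a point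
   reducing to [red_q(P)]. Hence [red_q(kP)] only depends on [k] mod [O_q],
   and [M_e] is the set of residues [m] with [m red_q(P)] in the image of
   [phi_q] for the coefficient [e] in [{1, nonsquare}]. Rescaling [x3] by [c]
   identifies the curves for [D] and [D c^2] without changing [phi_q], so the
   image only depends on the square class of [D]; it is stable under
   [x0 |-> -x0], i.e. under negation, which gives [-M_e = M_e]; finally
   [red_q(P) = phi_q(1:1:1:1:1)] on [C_1], so [1] lies in [M_1]. *)

Lemma nonsquare_ratio (F : finFieldType) (a b : F) :
  ~~ [exists x, x ^+ 2 == a] -> ~~ [exists x, x ^+ 2 == b] ->
  exists2 c : F, c != 0 & a = b * c ^+ 2.
Proof.
have [g gen] := cyclicP (field_unit_group_cyclic [group of [set: {unit F}]]).
have g0 : FinRing.uval g != 0 by rewrite -unitfE; case: g {gen}.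
have odd_power z : ~~ [exists x, x ^+ 2 == z] ->
    exists i, z = FinRing.uval g * FinRing.uval g ^+ (2 * i).
  move=> nsq; have z0 : z != 0.
    by apply: contraNneq nsq => ->; apply/existsP; exists 0; rewrite expr0n.
  have uz : z \is a GRing.unit by rewrite unitfE.
  have : FinRing.Unit uz \in <[g]>%g by rewrite -gen inE.
  case/cycleP => i ei; have zi : z = FinRing.uval g ^+ i by rewrite -FinRing.val_unitX -ei.
  have i_half := odd_double_half i; rewrite -muln2 in i_half.
  case: (boolP (odd i)) => [oi | ei2]; last first.
    case/negP: nsq; apply/existsP; exists (FinRing.uval g ^+ i./2).
    by rewrite -exprM zi; apply/eqP; congr (_ ^+ _); move: i_half; rewrite (negbTE ei2); lia.
  by exists i./2; rewrite zi -exprS; congr (_ ^+ _); move: i_half; rewrite oi; lia.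
move=> /odd_power[i ->] /odd_power[j ->].
exists (FinRing.uval g ^+ i / FinRing.uval g ^+ j); first by rewrite mulf_neq0 ?invr_eq0 ?expf_neq0.
rewrite !(mulnC 2) !exprM.
have := expf_neq0 j g0; move: (FinRing.uval g ^+ j) (FinRing.uval g ^+ i) => B A B0.
by field.
Qed.

Section CurveGroupLaw.
Variable K : fieldType.

Definition curve_rhs (x : K) : K := x ^+ 3 + a2 K * x ^+ 2 + a4 K * x.

Definition on_curve (P : pt K) : Prop :=
  if P is Some (x, y) then y ^+ 2 = curve_rhs x else True.

(* [(curve_rhs c - curve_rhs a) / (c - a)], as a polynomial in [a] and [c]. *)
Definition rhs_divdiff (a c : K) : K :=
  c ^+ 2 + c * a + a ^+ 2 + a2 K * (c + a) + a4 K.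

(* The sum of [(a, b)] and the point of abscissa [c] on the line of slope [l]
   through [(a, b)], as computed by [addpt]. *)
Definition line_add (l a b c : K) : pt K :=
  let x3 := l ^+ 2 - a2 K - a - c in Some (x3, - (b + l * (x3 - a))).

Definition tangent_slope (a b : K) : K :=
  (3%:R * a ^+ 2 + 2%:R * a2 K * a + a4 K) / (2%:R * b).

Lemma addpt0 : right_id None (@addpt K).
Proof. by case=> [[]|]. Qed.

Lemma addpt_chord (a b c d : K) : a != c ->
  addpt (Some (a, b)) (Some (c, d)) = line_add ((d - b) / (c - a)) a b c.
Proof. by move=> ac; rewrite /addpt (negbTE ac). Qed.

Lemma addpt_tangent (a b : K) : b != - b ->
  addpt (Some (a, b)) (Some (a, b)) = line_add (tangent_slope a b) a b a.
Proof. by move=> bb; rewrite /addpt eqxx (negbTE bb). Qed.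

Lemma addpt_opp (a b : K) : addpt (Some (a, - b)) (Some (a, b)) = None.
Proof. by rewrite /addpt !eqxx. Qed.

Lemma addpt_oppr (a b : K) : addpt (Some (a, b)) (Some (a, - b)) = None.
Proof. by rewrite /addpt opprK !eqxx. Qed.

(* The line of slope [l] through [(a, b)] meets the curve again at abscissa [c]:
   then [(b + l (c - a)) ^+ 2 = curve_rhs c]. *)
Definition on_line_slope (l a b c : K) : Prop :=
  2%:R * b * l + l ^+ 2 * (c - a) = rhs_divdiff a c.

Lemma line_add_on_curve (l a b c : K) : b ^+ 2 = curve_rhs a ->
  on_line_slope l a b c -> on_curve (line_add l a b c).
Proof.
rewrite /on_line_slope /line_add /= => hA hl; apply/eqP; rewrite -subr_eq0.
set x3 := l ^+ 2 - a2 K - a - c.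
have -> : (- (b + l * (x3 - a))) ^+ 2 - curve_rhs x3 =
  (b ^+ 2 - curve_rhs a) + (x3 - a) * (2%:R * b * l + l ^+ 2 * (c - a) - rhs_divdiff a c).
  by rewrite /x3 /curve_rhs /rhs_divdiff; ring.
by rewrite hA hl !subrr mulr0 addr0.
Qed.

Lemma chord_on_line_slope (a b c d : K) :
  b ^+ 2 = curve_rhs a -> d ^+ 2 = curve_rhs c -> a != c ->
  on_line_slope ((d - b) / (c - a)) a b c.
Proof.
move=> hA hC ac; have ca0 : c - a != 0 by rewrite subr_eq0 eq_sym.
rewrite /on_line_slope; apply: (mulfI ca0).
set l := (d - b) / (c - a); have hl : l * (c - a) = d - b by rewrite divfK.
transitivity (2%:R * b * (l * (c - a)) + (l * (c - a)) ^+ 2); first by ring.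
rewrite hl (_ : _ + _ = d ^+ 2 - b ^+ 2); last by ring.
by rewrite hA hC /curve_rhs /rhs_divdiff; ring.
Qed.

Lemma tangent_on_line_slope (a b : K) : 2%:R * b != 0 ->
  on_line_slope (tangent_slope a b) a b a.
Proof.
move=> b2; rewrite /on_line_slope /tangent_slope subrr mulr0 addr0 mulrC divfK //.
by rewrite /rhs_divdiff; ring.
Qed.

Lemma eqr_opp_double (b : K) : (b == - b) = (2%:R * b == 0).
Proof. by rewrite -addr_eq0 mulr_natl mulr2n. Qed.

Lemma same_abscissa (a b d : K) : b ^+ 2 = curve_rhs a -> d ^+ 2 = curve_rhs a ->
  d = b \/ d = - b.
Proof.
move=> hb hd; have := eqf_sqr d b; rewrite hb hd eqxx => /esym/orP[] /eqP; by [left | right].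
Qed.

Lemma addpt_on_curve (A B : pt K) : on_curve A -> on_curve B -> on_curve (addpt A B).
Proof.
case: A => [[a b]|] //; case: B => [[c d]|] // hA hB.
have [/eqP ac | ac] := boolP (a == c); last first.
  by rewrite addpt_chord //; apply/line_add_on_curve/chord_on_line_slope.
subst c; have [-> | ->] := same_abscissa hA hB; last by rewrite addpt_oppr.
have [/eqP bN | bN] := boolP (b == - b); first by rewrite {1}bN addpt_opp.
rewrite addpt_tangent //; apply: line_add_on_curve hA (tangent_on_line_slope _ _).
by rewrite -eqr_opp_double.
Qed.

Lemma addpt_secant (a b c d : K) : b ^+ 2 = curve_rhs a -> d ^+ 2 = curve_rhs c ->
  b + d != 0 -> addpt (Some (a, b)) (Some (c, d)) = line_add (rhs_divdiff a c / (b + d)) a b c.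
Proof.
move=> hA hC bd0; have [/eqP ac | ac] := boolP (a == c); last first.
  suff -> : rhs_divdiff a c / (b + d) = (d - b) / (c - a) by apply: addpt_chord.
  apply/eqP; rewrite eqr_div // ?subr_eq0 1?eq_sym //.
  rewrite (_ : (d - b) * (b + d) = d ^+ 2 - b ^+ 2); last by ring.
  by rewrite hC hA /curve_rhs /rhs_divdiff; apply/eqP; ring.
subst c; have [db | dNb] := same_abscissa hA hC; last by rewrite dNb subrr eqxx in bd0.
subst d; rewrite -mulr2n -mulr_natl in bd0.
rewrite addpt_tangent ?eqr_opp_double // /tangent_slope /rhs_divdiff -mulr2n -mulr_natl.
by congr (line_add (_ / _)); ring.
Qed.

Lemma negptK : involutive (@negpt K).
Proof. by case=> [[x y]|] //=; rewrite opprK. Qed.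

Lemma negptD (A B : pt K) : negpt (addpt A B) = addpt (negpt A) (negpt B).
Proof.
case: A => [[a b]|] //; case: B => [[c d]|] //=.
rewrite [- b == _]eqr_oppLR opprK; case: ifP => //= _; case: ifP => _.
  rewrite mulrN invrN mulrN sqrrN; congr (Some (_, _)); ring.
have -> : (- d - - b) / (c - a) = - ((d - b) / (c - a)) by rewrite -mulNr; congr (_ / _); ring.
by rewrite sqrrN; congr (Some (_, _)); ring.
Qed.

Lemma addpt_opp_line_add (l a b c : K) : b ^+ 2 = curve_rhs a ->
  on_line_slope l a b c -> 2%:R * b != 0 ->
  addpt (Some (a, - b)) (line_add l a b c) = Some (c, b + l * (c - a)).
Proof.
rewrite /line_add /on_line_slope => hA hl b2; set x3 := l ^+ 2 - a2 K - a - c.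
have [/eqP ax | ax] := boolP (a == x3); last first.
  rewrite addpt_chord //.
  have xa0 : x3 - a != 0 by rewrite subr_eq0 eq_sym.
  have -> : (- (b + l * (x3 - a)) - - b) / (x3 - a) = - l.
    by apply: (mulIf xa0); rewrite divfK //; ring.
  by rewrite /line_add sqrrN; congr (Some (_, _)); rewrite /x3; ring.
have l2 : l ^+ 2 = a2 K + 2%:R * a + c.
  by apply/eqP; rewrite -subr_eq0 -(subrr a) {2}ax /x3; apply/eqP; ring.
rewrite -ax subrr mulr0 addr0 addpt_tangent; last first.
  by rewrite opprK eq_sym eqr_opp_double.
have -> : tangent_slope a (- b) = - l.
  rewrite /tangent_slope mulrN invrN mulrN; congr (- _); apply: (mulIf b2); rewrite divfK //.
  have : 2%:R * b * l = rhs_divdiff a c - l ^+ 2 * (c - a) by rewrite -hl; ring.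
  by rewrite l2 mulrC => ->; rewrite /rhs_divdiff; ring.
by rewrite /line_add sqrrN l2; congr (Some (_, _)); ring.
Qed.

Lemma addKpt (a b : K) (Y : pt K) : b ^+ 2 = curve_rhs a -> on_curve Y -> 2%:R * b != 0 ->
  addpt (Some (a, - b)) (addpt (Some (a, b)) Y) = Y.
Proof.
case: Y => [[c d]|] hA hY b2; last by rewrite /= !eqxx.
have [/eqP ac | ac] := boolP (a == c); last first.
  rewrite addpt_chord // addpt_opp_line_add //; last exact: chord_on_line_slope.
  by rewrite divfK ?subr_eq0 1?eq_sym // addrC subrK.
subst c; have [-> | ->] := same_abscissa hA hY; last first.
  by rewrite addpt_oppr.
rewrite addpt_tangent ?eqr_opp_double // addpt_opp_line_add //; last exact: tangent_on_line_slope.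
by rewrite subrr mulr0 addr0.
Qed.

(* In the coordinates [(u, w) = (1 / x, y / x ^+ 2)] around the point at infinity, the
   curve reads [w ^+ 2 = u + a2 u ^+ 2 + a4 u ^+ 3]; adding [(a, b)] to a point near
   infinity gives a point whose coordinates are regular in [(u, w)] and equal [(a, b)]
   at [u = w = 0]. *)
Lemma line_add_near_infinity (a b u w : K) :
  u != 0 -> 1 - a * u != 0 -> w ^+ 2 = u + a2 K * u ^+ 2 + a4 K * u ^+ 3 ->
  let N := a2 K + 2%:R * a + (a4 K - a ^+ 2) * u - 2%:R * b * w + b ^+ 2 * u ^+ 2 in
  let alpha := a4 K + 2%:R * a * a2 K + 3%:R * a ^+ 2
                + (b ^+ 2 - a ^+ 2 * a2 K - 2%:R * a ^+ 3) * u in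
  let G := w * alpha - 2%:R * b * (1 + a2 K * u + a4 K * u ^+ 2) - b * u ^+ 2 * alpha
           + 2%:R * b ^+ 2 * u * w in
  line_add ((w / u ^+ 2 - b) / (u^-1 - a)) a b u^-1 =
  Some (N / (1 - a * u) ^+ 2 - a2 K - a, - (b + G / (1 - a * u) ^+ 3)).
Proof.
move=> u0 v0 hw N alpha G.
set l := (w / u ^+ 2 - b) / (u^-1 - a); set E := w ^+ 2 - (u + a2 K * u ^+ 2 + a4 K * u ^+ 3).
have E0 : E = 0 by rewrite /E hw subrr.
have x3E : l ^+ 2 - a2 K - a - u^-1 = N / (1 - a * u) ^+ 2 - a2 K - a.
  apply/eqP; rewrite -subr_eq0; apply/eqP.
  transitivity (E / (u ^+ 2 * (1 - a * u) ^+ 2)); last by rewrite E0 mul0r.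
  by rewrite /l /N /E; field; rewrite ?u0 ?v0.
rewrite /line_add x3E; congr (Some (_, - (_ + _))).
apply/eqP; rewrite -subr_eq0; apply/eqP.
transitivity (- 2%:R * b * E / (u * (1 - a * u) ^+ 3)); last by rewrite E0 mulr0 mul0r.
by rewrite /l /N /G /alpha /E; field; rewrite ?u0 ?v0.
Qed.

Lemma on_curve_iter_addpt (P : pt K) (n : nat) : on_curve P -> on_curve (iter n (addpt P) None).
Proof. by move=> hP; elim: n => [|n ih] //=; apply: addpt_on_curve. Qed.

Section Periodic.
Variables (P : pt K) (O : nat).
Hypothesis period : iter O (addpt P) None = None.

Lemma iter_addpt_mod (m : nat) : iter m (addpt P) None = iter (m %% O)%N (addpt P) None.
Proof.
rewrite {1}(divn_eq m O) addnC; elim: (m %/ O)%N => [|k ih]; first by rewrite mul0n addn0.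
by rewrite mulSnr addnA iterD period.
Qed.

Lemma negpt_iter_addpt (a b : K) (m : nat) : P = Some (a, b) -> b ^+ 2 = curve_rhs a ->
  2%:R * b != 0 -> (m <= O)%N -> negpt (iter m (addpt P) None) = iter (O - m) (addpt P) None.
Proof.
move=> PE hP b2; elim: m => [|m ih] le_mO; first by rewrite subn0 period.
rewrite iterS negptD ih 1?ltnW // -(subnSK le_mO) iterS PE /=.
by apply: addKpt => //; apply: (@on_curve_iter_addpt (Some (a, b))).
Qed.
End Periodic.
End CurveGroupLaw.

Section Reduction.
Variable q : nat.
Hypothesis q_prime : prime q.
Local Notation F := 'F_q.

Lemma Fp_nat_eq0 (n : nat) : ((n%:R : F) == 0) = (q %| n)%N.
Proof.
apply/eqP/idP => [h | h]; first by have := val_Fp_nat q_prime n; rewrite h => /esym/eqP.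
by apply/val_inj; rewrite /= val_Fp_nat //; apply/eqP.
Qed.

Lemma Fp_int_eq0 (d : int) : ((d%:~R : F) == 0) = (q%:Z %| d)%Z.
Proof.
by case: d => n; rewrite ?NegzE ?mulrNz ?oppr_eq0 Fp_nat_eq0 dvdzE ?abszN.
Qed.

Lemma not_dvd_num_den (r : rat) : (q%:Z %| numq r)%Z -> ~~ (q%:Z %| denq r)%Z.
Proof.
rewrite !dvdzE => q_num; apply/negP => q_den; have := coprime_num_den r.
rewrite /coprime => /eqP g1; have : (q %| gcdn `|numq r| `|denq r|)%N by rewrite dvdn_gcd q_num.
by rewrite g1 dvdn1 => /eqP q1; move: q_prime; rewrite q1.
Qed.

(* [r] lies in the local ring [Z_(q)], on which [ratF q] is the reduction map. *)
Definition qint (r : rat) : bool := ~~ (q%:Z %| denq r)%Z.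

Definition reduces (r : rat) (s : F) : Prop := qint r /\ ratF q r = s.

Lemma qint_reduces (r : rat) : qint r -> reduces r (ratF q r).
Proof. by []. Qed.

Lemma reduces_uniq (r : rat) (s t : F) : reduces r s -> reduces r t -> s = t.
Proof. by move=> [_ <-] [_ <-]. Qed.

Lemma reduces_frac (n d : int) : (d%:~R : F) != 0 ->
  reduces (n%:~R / d%:~R) (n%:~R / d%:~R).
Proof.
move=> d0; have dQ : (d%:~R : rat) != 0 by rewrite intr_eq0; apply: contraNneq d0 => ->.
set r := (n%:~R / d%:~R : rat).
have eQ : numq r * d = n * denq r.
  by apply: (@intr_inj rat); rewrite !intrM numqE /r -mulrA (mulrC _ d%:~R) mulrA divfK.
have eF : ((numq r)%:~R * d%:~R : F) = n%:~R * (denq r)%:~R by rewrite -!intrM eQ.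
have den0 : ((denq r)%:~R : F) != 0.
  apply: contraNneq d0 => den0; move: eF; rewrite den0 mulr0 => /eqP.
  rewrite mulf_eq0 => /orP[] // q_num.
  by have := @not_dvd_num_den r; rewrite -!Fp_int_eq0 q_num den0 eqxx => /(_ isT).
split; first by rewrite /qint -Fp_int_eq0.
by rewrite /ratF; apply: (mulIf den0); rewrite divfK //; apply: (mulIf d0); rewrite eF; field.
Qed.

Lemma reduces_int (n : int) : reduces n%:~R n%:~R.
Proof. by have := @reduces_frac n 1; rewrite !divr1; apply; apply: oner_neq0. Qed.

Lemma reduces_nat (n : nat) : reduces n%:R n%:R.
Proof. exact: (reduces_int n). Qed.

Lemma reduces_eq (r r' : rat) (s s' : F) : reduces r s -> r = r' -> s = s' -> reduces r' s'.
Proof. by move=> h <- <-. Qed.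

Lemma reduces_eqr (r : rat) (s s' : F) : reduces r s -> s = s' -> reduces r s'.
Proof. by move=> h <-. Qed.

Lemma reducesP (r : rat) (s : F) : reduces r s ->
  exists n d : int, [/\ r = n%:~R / d%:~R, (d%:~R : F) != 0 & s = n%:~R / d%:~R].
Proof.
move=> [qr <-]; exists (numq r), (denq r).
by move: qr; rewrite /qint -Fp_int_eq0 divq_num_den.
Qed.

Lemma int_neq0_of_F (d : int) : (d%:~R : F) != 0 -> (d%:~R : rat) != 0.
Proof. by move=> d0; rewrite intr_eq0; apply: contraNneq d0 => ->. Qed.

Lemma reducesD (r r' : rat) (s s' : F) :
  reduces r s -> reduces r' s' -> reduces (r + r') (s + s').
Proof.
move=> /reducesP[n [d [-> d0 ->]]] /reducesP[n' [d' [-> d0' ->]]].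
have [dQ dQ'] := (int_neq0_of_F d0, int_neq0_of_F d0').
have /(reduces_frac (n * d' + n' * d)) : ((d * d')%:~R : F) != 0.
  by rewrite intrM mulf_neq0.
by rewrite !intrD !intrM => /reduces_eq; apply; field; apply/andP.
Qed.

Lemma reducesM (r r' : rat) (s s' : F) :
  reduces r s -> reduces r' s' -> reduces (r * r') (s * s').
Proof.
move=> /reducesP[n [d [-> d0 ->]]] /reducesP[n' [d' [-> d0' ->]]].
have [dQ dQ'] := (int_neq0_of_F d0, int_neq0_of_F d0').
have /(reduces_frac (n * n')) : ((d * d')%:~R : F) != 0 by rewrite intrM mulf_neq0.
by rewrite !intrM => /reduces_eq; apply; field; apply/andP.
Qed.

Lemma reducesN (r : rat) (s : F) : reduces r s -> reduces (- r) (- s).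
Proof. by move/(reducesM (reduces_int (-1))); rewrite !mulrN1z !mulN1r. Qed.

Lemma reducesB (r r' : rat) (s s' : F) :
  reduces r s -> reduces r' s' -> reduces (r - r') (s - s').
Proof. by move=> h /reducesN; apply: reducesD. Qed.

Lemma reducesX (r : rat) (s : F) (n : nat) : reduces r s -> reduces (r ^+ n) (s ^+ n).
Proof.
move=> h; elim: n => [|n ih]; first exact: reduces_nat 1.
by rewrite !exprS; apply: reducesM.
Qed.

Lemma reducesV (r : rat) (s : F) : reduces r s -> s != 0 -> reduces r^-1 s^-1.
Proof.
move=> /reducesP[n [d [-> d0 ->]]] s0.
have n0 : (n%:~R : F) != 0 by apply: contraNneq s0 => ->; rewrite mul0r.
by rewrite !invf_div; apply: reduces_frac.
Qed.

Lemma reduces_div (r r' : rat) (s s' : F) :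
  reduces r s -> reduces r' s' -> s' != 0 -> reduces (r / r') (s / s').
Proof. by move=> h h' s0; apply/(reducesM h)/reducesV. Qed.

Ltac reduces_tac :=
  repeat first
    [ match goal with
      | |- reduces (_%:R) _ => apply: reduces_nat
      | |- reduces 1 _ => apply: (reduces_nat 1)
      | |- reduces (_ + _) _ => apply: reducesD
      | |- reduces (_ - _) _ => apply: reducesB
      | |- reduces (- _) _ => apply: reducesN
      | |- reduces (_ / _) _ => apply: reduces_div
      | |- reduces (_ * _) _ => apply: reducesM
      | |- reduces (_ ^+ _) _ => apply: reducesX
      end
    | eassumption ].

Lemma reduces_inv_not_qint (r : rat) : ~~ qint r -> reduces r^-1 0.
Proof.
rewrite /qint negbK => q_den.
have q_num : ~~ (q%:Z %| numq r)%Z by apply: contraL q_den; apply: not_dvd_num_den.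
rewrite -[r]divq_num_den invf_div.
have /(reduces_frac (denq r)) : ((numq r)%:~R : F) != 0 by rewrite Fp_int_eq0.
have /eqP -> : ((denq r)%:~R : F) == 0 by rewrite Fp_int_eq0.
by rewrite mul0r.
Qed.

Lemma not_qint_of_inv (r : rat) : r != 0 -> reduces r^-1 0 -> ~~ qint r.
Proof.
move=> r0 hV; apply/negP => /qint_reduces /reducesM /(_ hV).
rewrite mulfV // mulr0 => /(reduces_uniq (reduces_nat 1)) /eqP.
by rewrite oner_eq0.
Qed.

Lemma qint0 : qint 0. Proof. by case: (reduces_nat 0). Qed.

Lemma qint_sqr (r : rat) : qint (r ^+ 2) = qint r.
Proof.
apply/idP/idP => [|/qint_reduces /(reducesX 2) []//].
apply: contraLR => nr; have r0 : r != 0 by apply: contraNneq nr => ->; apply: qint0.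
apply: not_qint_of_inv; first by rewrite expf_neq0.
by have := reducesX 2 (reduces_inv_not_qint nr); rewrite exprVn expr0n.
Qed.

Lemma not_qintB (r r' : rat) : ~~ qint r -> qint r' -> ~~ qint (r - r').
Proof.
move=> nr /qint_reduces hr'; apply: contra nr => /qint_reduces /reducesD /(_ hr').
by rewrite subrK => -[].
Qed.

Lemma ratF_opp (r : rat) : ratF q (- r) = - ratF q r.
Proof. by rewrite /ratF numqN denqN intrN mulNr. Qed.

Lemma redq_qint (x y : rat) (s t : F) : reduces x s -> reduces y t ->
  redq q (Some (x, y)) = Some (s, t).
Proof. by case=> qx <- [_ <-]; rewrite /redq (negbTE qx). Qed.

Lemma redq_not_qint (x y : rat) : ~~ qint x -> redq q (Some (x, y)) = None.
Proof. by rewrite /redq /qint negbK => ->. Qed.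

Lemma reduces_curve_rhs (x : rat) (s : F) : reduces x s -> reduces (curve_rhs x) (curve_rhs s).
Proof.
by move=> hx; rewrite /curve_rhs /a2 /a4; reduces_tac.
Qed.

Lemma reduces_rhs_divdiff (a c : rat) (a' c' : F) : reduces a a' -> reduces c c' ->
  reduces (rhs_divdiff a c) (rhs_divdiff a' c').
Proof.
by move=> ha hc; rewrite /rhs_divdiff /a2 /a4; reduces_tac.
Qed.

Lemma qint_on_curve (x y : rat) : y ^+ 2 = curve_rhs x -> qint x -> qint y.
Proof. by move=> hxy /qint_reduces /reduces_curve_rhs []; rewrite -hxy qint_sqr. Qed.

Lemma reduces_on_curve (x y : rat) (s t : F) : y ^+ 2 = curve_rhs x ->
  reduces x s -> reduces y t -> t ^+ 2 = curve_rhs s.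
Proof.
move=> hxy hx hy; apply: (reduces_uniq (reducesX 2 hy)).
by rewrite hxy; apply: reduces_curve_rhs.
Qed.

Lemma redq_line_add (l a b c : rat) (m a' b' c' : F) :
  reduces l m -> reduces a a' -> reduces b b' -> reduces c c' ->
  redq q (line_add l a b c) = line_add m a' b' c'.
Proof.
by move=> hl ha hb hc; rewrite /line_add /a2; apply: redq_qint; reduces_tac.
Qed.

Lemma redq_line_add_not_qint (l a b c : rat) : ~~ qint l -> qint a -> qint c ->
  redq q (line_add l a b c) = None.
Proof.
move=> nl qa qc; apply/redq_not_qint/(not_qintB _ qc)/(not_qintB _ qa).
by apply: not_qintB; [rewrite qint_sqr | case: (reduces_nat 8)].
Qed.

Lemma reduces_neq (r r' : rat) (s s' : F) : reduces r s -> reduces r' s' -> s != s' -> r != r'.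
Proof.
by move=> hr hr'; apply: contra_neq => e; rewrite e in hr; apply: reduces_uniq hr hr'.
Qed.

Lemma redq_addpt_opposite (a b c d : rat) (a' b' : F) :
  b ^+ 2 = curve_rhs a -> d ^+ 2 = curve_rhs c ->
  reduces a a' -> reduces b b' -> reduces c a' -> reduces d (- b') -> 2%:R * b' != 0 ->
  redq q (addpt (Some (a, b)) (Some (c, d))) = None.
Proof.
move=> hA hC ha hb hc hd b2.
have db : d != b by apply: (reduces_neq hd hb); rewrite eq_sym eqr_opp_double.
have [/eqP ac | ac] := boolP (a == c).
  subst c; have [dE | ->] := same_abscissa hA hC; first by rewrite dE eqxx in db.
  by rewrite addpt_oppr.
rewrite addpt_chord //; apply: redq_line_add_not_qint (proj1 ha) (proj1 hc).
apply: not_qint_of_inv; first by rewrite mulf_eq0 invr_eq0 !subr_eq0 negb_or db eq_sym.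
rewrite invf_div -[0](mul0r (- b' - b')^-1) -[0](subrr a').
apply: reduces_div; try exact: reducesB.
by rewrite -opprD oppr_eq0 -mulr2n -mulr_natl.
Qed.

Lemma redq_addpt_qint (a b c d : rat) : b ^+ 2 = curve_rhs a -> d ^+ 2 = curve_rhs c ->
  qint a -> qint c -> 2%:R * ratF q b != 0 ->
  redq q (addpt (Some (a, b)) (Some (c, d))) = addpt (redq q (Some (a, b))) (redq q (Some (c, d))).
Proof.
move=> hA hC /qint_reduces ha /qint_reduces hc b2.
have hb := qint_reduces (qint_on_curve hA (proj1 ha)).
have hd := qint_reduces (qint_on_curve hC (proj1 hc)).
rewrite (redq_qint ha hb) (redq_qint hc hd).
have [hA' hC'] := (reduces_on_curve hA ha hb, reduces_on_curve hC hc hd).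
move: ha hb hc hd b2 hA' hC'; set a' := ratF q a; set b' := ratF q b.
set c' := ratF q c; set d' := ratF q d => ha hb hc hd b2 hA' hC'.
have [bd0 | /negPn /eqP bd0] := boolP (b' + d' != 0).
  have bdQ : b + d != 0 by apply: (reduces_neq (reducesD hb hd) (reduces_nat 0)).
  rewrite !addpt_secant //; apply: redq_line_add => //.
  by apply: reduces_div => //; [apply: reduces_rhs_divdiff | apply: reducesD].
have [ac' | /negPn /eqP ac'] := boolP (a' != c').
  have ac : a != c by apply: reduces_neq ha hc ac'.
  rewrite !addpt_chord // 1?eq_sym //; apply: redq_line_add => //.
  by apply: reduces_div; rewrite ?subr_eq0 1?eq_sym //; apply: reducesB.
have d'E : d' = - b' by apply/eqP; rewrite -addr_eq0 addrC bd0.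
rewrite -ac' d'E addpt_oppr.
by apply: (redq_addpt_opposite hA hC ha hb); rewrite ?ac' -?d'E.
Qed.

Lemma redq_addpt_not_qint (a b x y : rat) : b ^+ 2 = curve_rhs a -> y ^+ 2 = curve_rhs x ->
  qint a -> ~~ qint x -> redq q (addpt (Some (a, b)) (Some (x, y))) = redq q (Some (a, b)).
Proof.
move=> hA hX qa nx; have ha := qint_reduces qa.
have hb := qint_reduces (qint_on_curve hA qa); rewrite (redq_qint ha hb).
have x0 : x != 0 by apply: contraNneq nx => ->; apply: qint0.
have ax : a != x by apply: contraNneq nx => <-.
have hu : reduces x^-1 0 := reduces_inv_not_qint nx.
have [u0 ex] : x^-1 != 0 /\ x = x^-1^-1 by rewrite invr_eq0 invrK.
have hw : (y / x ^+ 2) ^+ 2 = x^-1 + a2 rat * x^-1 ^+ 2 + a4 rat * x^-1 ^+ 3.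
  by rewrite expr_div_n hX /curve_rhs; field.
have ey : y = (y / x ^+ 2) / x^-1 ^+ 2 by rewrite exprVn invrK divfK ?expf_neq0.
rewrite addpt_chord // ex ey; move: (y / x ^+ 2) (x^-1) hu u0 hw => w u hu u0 hw.
have hw0 : reduces w 0.
  have h0 : reduces (w ^+ 2) 0.
    by rewrite hw /a2 /a4; apply: reduces_eqr; [reduces_tac | ring].
  have qw : qint w by rewrite -qint_sqr; case: h0.
  split => //; have /eqP := reduces_uniq (reducesX 2 (qint_reduces qw)) h0.
  by rewrite expf_eq0 => /eqP.
have hv : reduces (1 - a * u) 1 by apply: reduces_eqr; [reduces_tac | ring].
have v0 : 1 - a * u != 0 by apply: (reduces_neq hv (reduces_nat 0)); rewrite oner_neq0.
rewrite line_add_near_infinity // /a2 /a4.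
apply: redq_qint; apply: reduces_eqr; reduces_tac;
  by rewrite ?mulr0 ?subr0 ?expr1n ?divr1 ?oner_neq0 //; ring.
Qed.

Lemma redq_addpt (a b : rat) (B : pt rat) : b ^+ 2 = curve_rhs a -> on_curve B ->
  qint a -> 2%:R * ratF q b != 0 ->
  redq q (addpt (Some (a, b)) B) = addpt (redq q (Some (a, b))) (redq q B).
Proof.
move=> hA; case: B => [[c d] hC | _] qa b2; last by rewrite !addpt0.
have [qc | nc] := boolP (qint c); first exact: redq_addpt_qint.
by rewrite redq_addpt_not_qint // (redq_not_qint _ nc) addpt0.
Qed.

Lemma redq_iter_addpt (a b : rat) (n : nat) : b ^+ 2 = curve_rhs a ->
  qint a -> 2%:R * ratF q b != 0 ->
  redq q (iter n (addpt (Some (a, b))) None) = iter n (addpt (redq q (Some (a, b)))) None.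
Proof.
move=> hA qa b2; elim: n => [|n ih] //=.
by rewrite redq_addpt // ?ih //; apply: on_curve_iter_addpt.
Qed.

Lemma redq_negpt (X : pt rat) : redq q (negpt X) = negpt (redq q X).
Proof. by case: X => [[x y]|] //=; case: ifP => //; rewrite ratF_opp. Qed.
End Reduction.

Section PhiImage.
Variable q : nat.
Local Notation F := 'F_q.

Definition on_CD (d x0 x1 x2 x3 x4 : F) : bool :=
  [|| x0 != 0, x1 != 0, x2 != 0, x3 != 0 | x4 != 0] &&
  [&& x0 ^+ 2 - 2%:R * x1 ^+ 2 + x2 ^+ 2 == 0,
      x1 ^+ 2 - 2%:R * x2 ^+ 2 + d * x3 ^+ 2 == 0 &
      x2 ^+ 2 - 2%:R * d * x3 ^+ 2 + x4 ^+ 2 == 0].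

Definition phi_image (d : F) (S : pt F) : bool :=
  [exists x0, exists x1, exists x2, exists x3, exists x4,
     on_CD d x0 x1 x2 x3 x4 && (S == phiq q x0 x1 x2 x4)].

Lemma imphiP (D : int) (S : pt F) : imphi q D S <-> phi_image D%:~R S.
Proof.
split => [[x0 [x1 [x2 [x3 [x4 [hC ->]]]]]] | ].
  by apply/existsP; exists x0; apply/existsP; exists x1; apply/existsP; exists x2;
     apply/existsP; exists x3; apply/existsP; exists x4; rewrite eqxx andbT.
case/existsP=> x0 /existsP[x1 /existsP[x2 /existsP[x3 /existsP[x4 /andP[hC /eqP ->]]]]].
by exists x0, x1, x2, x3, x4.
Qed.

Lemma phi_image_scale (d c : F) (S : pt F) : c != 0 -> phi_image d S -> phi_image (d * c ^+ 2) S.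
Proof.
move=> c0; case/existsP=> x0 /existsP[x1 /existsP[x2 /existsP[x3 /existsP[x4 /andP[hC hS]]]]].
apply/existsP; exists x0; apply/existsP; exists x1; apply/existsP; exists x2.
apply/existsP; exists (x3 / c); apply/existsP; exists x4; rewrite hS andbT.
move: hC; rewrite /on_CD mulf_eq0 invr_eq0 (negbTE c0) orbF.
have -> : d * c ^+ 2 * (x3 / c) ^+ 2 = d * x3 ^+ 2 by field.
by have -> : 2%:R * (d * c ^+ 2) * (x3 / c) ^+ 2 = 2%:R * d * x3 ^+ 2 by field.
Qed.

Lemma phi_image_scaleE (d c : F) (S : pt F) : c != 0 ->
  phi_image (d * c ^+ 2) S = phi_image d S.
Proof.
move=> c0; apply/idP/idP; last exact: phi_image_scale.
by move/(phi_image_scale (invr_neq0 c0)); rewrite (_ : _ * _ = d) //; field.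
Qed.

Lemma phi_image_negpt (d : F) (S : pt F) : phi_image d S -> phi_image d (negpt S).
Proof.
case/existsP=> x0 /existsP[x1 /existsP[x2 /existsP[x3 /existsP[x4 /andP[hC /eqP ->]]]]].
apply/existsP; exists (- x0); apply/existsP; exists x1; apply/existsP; exists x2.
apply/existsP; exists x3; apply/existsP; exists x4.
move: hC; rewrite /on_CD oppr_eq0 sqrrN => -> /=; rewrite /phiq; case: ifP => _ //=.
by apply/eqP; congr (Some (_, _)); rewrite ?sqrrN //; ring.
Qed.

Lemma phi_image_negptE (d : F) (S : pt F) : phi_image d (negpt S) = phi_image d S.
Proof.
apply/idP/idP => [/phi_image_negpt | ]; last exact: phi_image_negpt.
by rewrite negptK.
Qed.

Definition nonsquare : F := odflt 1 [pick x : F | ~~ [exists y, y ^+ 2 == x]].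

Definition sqclass (D : int) : F := if legendre q D == 1 then 1 else nonsquare.

Lemma phi_image_sqclass (D : int) (S : pt F) : prime q -> ~~ (q%:Z %| D)%Z ->
  phi_image D%:~R S = phi_image (sqclass D) S.
Proof.
move=> q_prime qD; rewrite /sqclass /legendre (negbTE qD).
have [/existsP[c /eqP cD] | nsq] /= := boolP [exists x : F, x ^+ 2 == D%:~R].
  have c0 : c != 0.
    by apply: contraNneq qD => c0; rewrite -Fp_int_eq0 // -cD c0 expr0n.
  by rewrite -cD -(phi_image_scaleE 1 S c0) mul1r.
rewrite /nonsquare; case: pickP => [n hn | none]; last by move: (none D%:~R); rewrite nsq.
by have [c c0 ->] := nonsquare_ratio nsq hn; rewrite phi_image_scaleE.
Qed.
End PhiImage.

Lemma P0_on_curve (K : fieldType) : (24%:R : K) ^+ 2 = curve_rhs 6%:R.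
Proof. by rewrite /curve_rhs /a2 /a4; ring. Qed.

Section MultiplesOfP.
Variable q : nat.
Hypothesis q_prime : prime q.
Hypothesis q_gt3 : (3 < q)%N.
Local Notation F := 'F_q.
Local Notation Pq := (redq q P0).

Lemma redq_P0 : Pq = Some (6%:R, 24%:R).
Proof. exact: redq_qint (reduces_nat q_prime 6) (reduces_nat q_prime 24). Qed.

Lemma two24_neq0 : 2%:R * (24%:R : F) != 0.
Proof.
rewrite -natrM Fp_nat_eq0 // (_ : 2 * 24 = 2 ^ 4 * 3)%N // Euclid_dvdM // Euclid_dvdX //.
by apply/negP => /orP[/andP[/(@dvdn_leq _ 2 isT) q2 _] | /(@dvdn_leq _ 3 isT) q3]; lia.
Qed.

Lemma redq_iter_P0 (n : nat) : redq q (iter n (addpt P0) None) = iter n (addpt Pq) None.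
Proof.
apply: (redq_iter_addpt q_prime); first exact: P0_on_curve.
  by case: (reduces_nat q_prime 6).
by case: (reduces_nat q_prime 24) => _ ->; apply: two24_neq0.
Qed.

Lemma HDq_sqclass (D : int) (R : pt rat) : ~~ (q%:Z %| D)%Z ->
  HDq q D R <-> inH R /\ phi_image (sqclass q D) (redq q R).
Proof.
move=> qD; rewrite /HDq -phi_image_sqclass //.
by split=> -[hR /imphiP hS].
Qed.

(* [p.+2] stands for the order [O_q] of [red_q(P)], which is at least 2;
   ['Z_O] is only the ring of integers mod [O] when [O > 1]. *)
Variable p : nat.
Hypothesis period : iter p.+2 (addpt Pq) None = None.

Lemma redq_mulpt_P0 (k : int) :
  redq q (mulpt k P0) = iter (k%:~R : 'Z_p.+2) (addpt Pq) None.
Proof.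
have Pq_on : (24%:R : F) ^+ 2 = curve_rhs 6%:R := P0_on_curve _.
case: k => n.
  rewrite (_ : mulpt _ _ = iter n (addpt P0) None) // redq_iter_P0.
  by rewrite (iter_addpt_mod period) val_Zp_nat.
rewrite (_ : mulpt _ _ = negpt (iter n.+1 (addpt P0) None)) // redq_negpt redq_iter_P0.
have -> : val ((Negz n)%:~R : 'Z_p.+2) = ((p.+2 - n.+1 %% p.+2) %% p.+2)%N.
  by rewrite NegzE mulrNz /= val_Zp_nat.
rewrite -(iter_addpt_mod period) (iter_addpt_mod period n.+1).
by rewrite (negpt_iter_addpt period redq_P0 Pq_on two24_neq0) // ltnW ?ltn_pmod.
Qed.

Definition phi_residues (e : F) : {set 'Z_p.+2} :=
  [set m : 'Z_p.+2 | phi_image e (iter m (addpt Pq) None)].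

Lemma HDq_phi_residues (D : int) (R : pt rat) : ~~ (q%:Z %| D)%Z ->
  HDq q D R <-> exists k : int,
    [/\ oddz k, R = mulpt k P0 & (k%:~R : 'Z_p.+2) \in phi_residues (sqclass q D)].
Proof.
move=> qD; rewrite HDq_sqclass //; split => [[[k [ok ->]]] | [k [ok -> hk]]].
  by rewrite redq_mulpt_P0 => hk; exists k; rewrite inE.
by split; [exists k | move: hk; rewrite redq_mulpt_P0 inE].
Qed.

Lemma phi_residuesN (e : F) (m : 'Z_p.+2) : m \in phi_residues e -> - m \in phi_residues e.
Proof.
rewrite !inE (_ : val (- m) = (p.+2 - m) %% p.+2)%N // -(iter_addpt_mod period).
have m_le : (m <= p.+2)%N := ltnW (ltn_ord m).
by rewrite -(negpt_iter_addpt period redq_P0 (P0_on_curve _) two24_neq0 m_le) phi_image_negptE.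
Qed.

Lemma one_in_phi_residues1 : 1 \in phi_residues 1.
Proof.
rewrite inE (_ : iter _ _ _ = Pq) ?redq_P0; last exact: addpt0.
apply/existsP; exists 1; apply/existsP; exists 1; apply/existsP; exists 1.
apply/existsP; exists 1; apply/existsP; exists 1.
have e : (1 - 2%:R + 1 : F) = 0 by ring.
by rewrite /on_CD /phiq oner_neq0 !expr1n !mulr1 !divr1 /= e eqxx.
Qed.
End MultiplesOfP.

Unset Implicit Arguments.
Theorem proposition6p4 (q : nat) (q_prime : prime q) (q_gt3 : (3 < q)%N) :
  (forall D D' : int, squarefreez D -> squarefreez D' ->
     ~~ (q%:Z %| D)%Z -> ~~ (q%:Z %| D')%Z ->
     legendre q D = legendre q D' ->
     forall R : pt rat, HDq q D R <-> HDq q D' R)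
  /\
  (forall O : nat, is_orderP q O ->
   exists M1 Mm1 : {set 'Z_O},
     (forall D : int, squarefreez D -> ~~ (q%:Z %| D)%Z ->
        forall R : pt rat,
          HDq q D R <->
          exists k : int, [/\ oddz k, R = mulpt k P0 &
             (k%:~R : 'Z_O) \in (if legendre q D == 1 then M1 else Mm1)])
     /\ (1 : 'Z_O) \in M1
     /\ (forall k : 'Z_O, k \in M1 -> - k \in M1)
     /\ (forall k : 'Z_O, k \in Mm1 -> - k \in Mm1)).
Proof.
split=> [D D' _ _ qD qD' sameD R | O [O_gt0 [period _]]].
  by rewrite (HDq_sqclass q_prime R qD) (HDq_sqclass q_prime R qD') /sqclass sameD.
case: O O_gt0 period => [|[|p]] // _ period.
  by move: period; rewrite (redq_P0 q_prime).
exists (@phi_residues q p 1), (phi_residues p (nonsquare q)); split; last split.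
- move=> D _ qD R; rewrite (HDq_phi_residues q_prime q_gt3 period R qD).
  by rewrite /sqclass -fun_if.
- exact: one_in_phi_residues1.
- by split=> k; apply: (phi_residuesN q_prime q_gt3 period).
Qed.
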